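(* Let $K$ be a complete metric space, let $X$ be a (real or complex) Banach space, and let $A$ be a closed subspace of $C_b(K:X)$ such that for every $x\in X$, every $x^*\in X^*$, every $f\in A$ and every integer $m\ge 1$, the function $t\mapsto \big(x^*(f(t))\big)^m x$ belongs to $A$. Then the set $\rho A$ of strong peak points for $A$ is a norming subset of $A$ if and only if the set of all strong peak functions in $A$ is a dense $G_\delta$ subset of $A$.
   Context: $C_b(K:X)$ denotes the Banach space of all bounded continuous functions $K\to X$ with the supremum norm. A nonzero $f\in C_b(K:X)$ is a strong peak function at $t\in K$ if every sequence $\{t_n\}$ in $K$ with $\lim_n\|f(t_n)\|=\|f\|$ converges to $t$. For a subspace $A\subset C_b(K:X)$, a point $t\in K$ is a strong peak point for $A$ if there is a strong peak function $f\in A$ with $\|f\|=\|f(t)\|$; $\rho A$ denotes the set of all strong peak points for $A$. A subset $F\subset K$ is a norming subset for $A$ if $\|f\|=\sup\{\|f(t)\|:t\in F\}$ for every $f\in A$. *)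

From Stdlib Require Import Reals Lra ClassicalEpsilon.
Set Implicit Arguments.
Open Scope R_scope.

Record Scalar : Type := {
  sc :> Type;
  s0 : sc; s1 : sc;
  sadd : sc -> sc -> sc; smul : sc -> sc -> sc; sopp : sc -> sc;
  sabs : sc -> R }.

Definition RScalar : Scalar :=
  {| sc := R; s0 := 0; s1 := 1; sadd := Rplus; smul := Rmult; sopp := Ropp;
     sabs := Rabs |}.

Definition Cplx : Type := (R * R)%type.
Definition Cadd (z w : Cplx) : Cplx := (fst z + fst w, snd z + snd w).
Definition Cmul (z w : Cplx) : Cplx :=
  (fst z * fst w - snd z * snd w, fst z * snd w + snd z * fst w).
Definition Copp (z : Cplx) : Cplx := (- fst z, - snd z).
Definition Cabs (z : Cplx) : R := sqrt (fst z ^ 2 + snd z ^ 2).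

Definition CScalar : Scalar :=
  {| sc := Cplx; s0 := (0, 0); s1 := (1, 0); sadd := Cadd; smul := Cmul;
     sopp := Copp; sabs := Cabs |}.

Inductive scalar_field := RealField | ComplexField.

Definition scalars (k : scalar_field) : Scalar :=
  match k with RealField => RScalar | ComplexField => CScalar end.

Fixpoint spow {F : Scalar} (a : F) (m : nat) : F :=
  match m with O => s1 F | Datatypes.S m' => smul F (@spow F a m') a end.

Record NormedSpace (F : Scalar) : Type := {
  vec :> Type;
  vzero : vec;
  vadd : vec -> vec -> vec;
  vopp : vec -> vec;
  vscal : F -> vec -> vec;
  vnorm : vec -> R;
  vadd_assoc : forall x y z, vadd x (vadd y z) = vadd (vadd x y) z;
  vadd_comm : forall x y, vadd x y = vadd y x;
  vadd_0 : forall x, vadd x vzero = x;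
  vadd_opp : forall x, vadd x (vopp x) = vzero;
  vscal_assoc : forall a b x, vscal a (vscal b x) = vscal (smul F a b) x;
  vscal_1 : forall x, vscal (s1 F) x = x;
  vscal_distr_v : forall a x y, vscal a (vadd x y) = vadd (vscal a x) (vscal a y);
  vscal_distr_s : forall a b x, vscal (sadd F a b) x = vadd (vscal a x) (vscal b x);
  vnorm_eq0 : forall x, vnorm x = 0 <-> x = vzero;
  vnorm_scal : forall a x, vnorm (vscal a x) = sabs F a * vnorm x;
  vnorm_triangle : forall x y, vnorm (vadd x y) <= vnorm x + vnorm y }.

Arguments vzero {F} n.
Arguments vadd {F} n _ _.
Arguments vopp {F} n _.
Arguments vscal {F} n _ _.
Arguments vnorm {F} n _.

Definition vsub (F : Scalar) (X : NormedSpace F) (x y : X) : X := vadd X x (vopp X y).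

Definition Banach (F : Scalar) (X : NormedSpace F) : Prop :=
  forall u : nat -> X,
    (forall eps, eps > 0 -> exists N, forall n m, (n >= N)%nat -> (m >= N)%nat ->
        vnorm X (vsub X (u n) (u m)) < eps) ->
    exists l : X, forall eps, eps > 0 -> exists N, forall n, (n >= N)%nat ->
        vnorm X (vsub X (u n) l) < eps.

Definition is_dual (F : Scalar) (X : NormedSpace F) (phi : X -> F) : Prop :=
  (forall x y, phi (vadd X x y) = sadd F (phi x) (phi y)) /\
  (forall a x, phi (vscal X a x) = smul F a (phi x)) /\
  (exists M, forall x, sabs F (phi x) <= M * vnorm X x).

Record MetricSpace : Type := {
  pt :> Type;
  mdist : pt -> pt -> R;
  dist_eq0 : forall x y, mdist x y = 0 <-> x = y;
  dist_sym : forall x y, mdist x y = mdist y x;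
  dist_tri : forall x y z, mdist x z <= mdist x y + mdist y z }.
Arguments mdist m _ _ : clear implicits.

Definition seq_conv (K : MetricSpace) (u : nat -> K) (l : K) : Prop :=
  forall eps, eps > 0 -> exists N, forall n, (n >= N)%nat -> mdist K (u n) l < eps.

Arguments seq_conv {K} u l.

Definition complete_metric (K : MetricSpace) : Prop :=
  forall u : nat -> K,
    (forall eps, eps > 0 -> exists N, forall n m, (n >= N)%nat -> (m >= N)%nat ->
        mdist K (u n) (u m) < eps) ->
    exists l, seq_conv u l.

Section Cb.
Variables (F : Scalar) (K : MetricSpace) (X : NormedSpace F).

Definition fcont (f : K -> X) : Prop :=
  forall t eps, eps > 0 -> exists delta, delta > 0 /\
    forall s, mdist K s t < delta -> vnorm X (vsub X (f s) (f t)) < eps.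

Definition fbounded (f : K -> X) : Prop := exists M, forall t, vnorm X (f t) <= M.

Definition in_Cb (f : K -> X) : Prop := fcont f /\ fbounded f.

Definition fzero : K -> X := fun _ => vzero X.
Definition fadd (f g : K -> X) : K -> X := fun t => vadd X (f t) (g t).
Definition fscal (a : F) (f : K -> X) : K -> X := fun t => vscal X a (f t).
Definition fsub (f g : K -> X) : K -> X := fun t => vsub X (f t) (g t).

(** supremum norm (meaningful for bounded f; sup over {0} ∪ {||f t||}
    so that it is 0 when K is empty) *)
Definition sup_norm (f : K -> X) : R :=
  epsilon (inhabits 0) (is_lub (fun r => r = 0 \/ exists t, r = vnorm X (f t))).

Definition closed_subspace (A : (K -> X) -> Prop) : Prop :=
  (forall f, A f -> in_Cb f) /\
  A fzero /\
  (forall f g, A f -> A g -> A (fadd f g)) /\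
  (forall a f, A f -> A (fscal a f)) /\
  (forall (u : nat -> K -> X) (f : K -> X), (forall n, A (u n)) ->
     (forall eps, eps > 0 -> exists N, forall n t, (n >= N)%nat ->
        vnorm X (vsub X (u n t) (f t)) <= eps) ->
     A f).

Definition strong_peak_at (f : K -> X) (t : K) : Prop :=
  in_Cb f /\ (exists s, f s <> vzero X) /\
  forall u : nat -> K, Un_cv (fun n => vnorm X (f (u n))) (sup_norm f) -> seq_conv u t.

Definition strong_peak_fun (f : K -> X) : Prop := exists t, strong_peak_at f t.

Definition rho (A : (K -> X) -> Prop) (t : K) : Prop :=
  exists f, A f /\ strong_peak_at f t /\ vnorm X (f t) = sup_norm f.

(** norming subset (sup over F; the sup over an empty set does not exist) *)
Definition norming (Fs : K -> Prop) (A : (K -> X) -> Prop) : Prop :=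
  forall f, A f -> is_lub (fun r => exists t, Fs t /\ r = vnorm X (f t)) (sup_norm f).

Definition peak_funs (A : (K -> X) -> Prop) (f : K -> X) : Prop :=
  A f /\ strong_peak_fun f.

Definition dense_in (D A : (K -> X) -> Prop) : Prop :=
  (forall f, D f -> A f) /\
  forall f, A f -> forall eps, eps > 0 -> exists g, D g /\ sup_norm (fsub f g) < eps.

Definition open_in (U A : (K -> X) -> Prop) : Prop :=
  forall f, A f -> U f -> exists eps, eps > 0 /\
    forall g, A g -> sup_norm (fsub g f) < eps -> U g.

Definition Gdelta_in (D A : (K -> X) -> Prop) : Prop :=
  (forall f, D f -> A f) /\
  exists U : nat -> (K -> X) -> Prop,
    (forall n, open_in (U n) A) /\ forall f, A f -> (D f <-> forall n, U n f).

End Cb.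

Arguments fcont {F K X} f.
Arguments fbounded {F K X} f.
Arguments in_Cb {F K X} f.
Arguments fzero {F K X} _.
Arguments fadd {F K X} f g _.
Arguments fscal {F K X} a f _.
Arguments fsub {F K X} f g _.
Arguments sup_norm {F K X} f.
Arguments closed_subspace {F K X} A.
Arguments strong_peak_at {F K X} f t.
Arguments strong_peak_fun {F K X} f.
Arguments rho {F K X} A t.
Arguments norming {F K X} Fs A.
Arguments peak_funs {F K X} A f.
Arguments dense_in {F K X} D A.
Arguments open_in {F K X} U A.
Arguments Gdelta_in {F K X} D A.
Arguments Banach {F} X.
Arguments is_dual {F} X phi.

From Pilot Require Import Defs.
From Stdlib Require Import Reals Lra Lia.
From Stdlib Require Import ClassicalEpsilon FunctionalExtensionality PropExtensionality.
From mathcomp Require classical_sets boolp.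
Open Scope R_scope.

(** For each n let [concentrated n]
    be the set of nonzero f in A having a top level set [{t | ‖f t‖ > ‖f‖ - δ}]
    inside a ball of radius 1/(n+1).  These sets are open, and (K being complete)
    their intersection is exactly the set of strong peak functions of A, which is
    therefore a G_δ.  If the strong peak points norm A, each [concentrated n] is
    dense: perturb f by [t |-> (x^*(h t))^m w], a high power of a normalized peak
    function h at a point where f almost attains its norm, with x^* a norming
    functional given by the Hahn-Banach theorem; Baire's theorem then makes the
    strong peak functions dense.  Conversely, density of the strong peak functions
    makes their peak points norming. *)

Definition emb (k : scalar_field) (r : R) : scalars k :=
  match k as k0 return sc (scalars k0) with RealField => r | ComplexField => (r, 0) end.

Lemma pair_eq (a b c d : R) : a = c -> b = d -> (a, b) = (c, d).
Proof. intros -> ->; reflexivity. Qed.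

Lemma emb1 k : emb k 1 = s1 _.
Proof. destruct k; reflexivity. Qed.

Lemma sadd_emb k r s : sadd _ (emb k r) (emb k s) = emb k (r + s).
Proof. destruct k; simpl; [reflexivity|]. unfold Cadd; simpl. apply pair_eq; ring. Qed.

Lemma smul_emb k r s : smul _ (emb k r) (emb k s) = emb k (r * s).
Proof. destruct k; simpl; [reflexivity|]. unfold Cmul; simpl. apply pair_eq; ring. Qed.

Lemma sabs_emb k r : sabs _ (emb k r) = Rabs r.
Proof.
  destruct k; simpl; [reflexivity|]. unfold Cabs; simpl.
  rewrite <- sqrt_Rsqr_abs. f_equal. unfold Rsqr; ring.
Qed.

Lemma sabs_nonneg k (a : scalars k) : 0 <= sabs _ a.
Proof. destruct k; simpl. apply Rabs_pos. apply sqrt_pos. Qed.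

Lemma sabs_mul k (a b : scalars k) : sabs _ (smul _ a b) = sabs _ a * sabs _ b.
Proof.
  destruct k; simpl in *; [apply Rabs_mult|].
  destruct a as [a1 a2], b as [b1 b2]; unfold Cabs, Cmul; simpl.
  rewrite <- sqrt_mult by nra. f_equal. ring.
Qed.

Lemma sabs_spow k (a : scalars k) m : sabs _ (spow a m) = sabs _ a ^ m.
Proof.
  induction m as [|m IH]; simpl.
  - rewrite <- emb1, sabs_emb, Rabs_R1; reflexivity.
  - rewrite sabs_mul, IH; ring.
Qed.

Lemma Cabs_real_part (a b : R) : Cabs (a, b) <= a -> b = 0.
Proof.
  unfold Cabs; cbn [fst snd]. intros H. pose proof (sqrt_pos (a ^ 2 + b ^ 2)).
  assert (Hsq : sqrt (a ^ 2 + b ^ 2) * sqrt (a ^ 2 + b ^ 2) <= a * a)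
    by (apply Rmult_le_compat; lra).
  rewrite sqrt_sqrt in Hsq by nra.
  assert (Hb : b * b = 0).
  { pose proof (Rle_0_sqr b). unfold Rsqr in *. simpl in Hsq. rewrite !Rmult_1_r in Hsq. lra. }
  destruct (Rmult_integral _ _ Hb); assumption.
Qed.

Lemma spow_s1 k m : @spow (scalars k) (s1 _) m = s1 _.
Proof.
  induction m as [|m IH]; simpl; [reflexivity|]. rewrite IH.
  destruct k; simpl; [ring|]. unfold Cmul; simpl. apply pair_eq; ring.
Qed.

(** The axioms of [NormedSpace] say nothing directly about [0], [-1] or [vsub];
    the usual identities are derived from the action of the real scalars. *)
Section VectorAlgebra.
Variables (k : scalar_field) (X : NormedSpace (scalars k)).

Definition rscal (r : R) (x : X) : X := vscal X (emb k r) x.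

Lemma rscal_assoc a b x : rscal a (rscal b x) = rscal (a * b) x.
Proof. unfold rscal. rewrite vscal_assoc, smul_emb; reflexivity. Qed.

Lemma rscal_1 x : rscal 1 x = x.
Proof. unfold rscal. rewrite emb1, vscal_1; reflexivity. Qed.

Lemma rscal_distr_v a x y : rscal a (vadd X x y) = vadd X (rscal a x) (rscal a y).
Proof. apply vscal_distr_v. Qed.

Lemma rscal_distr_s a b x : rscal (a + b) x = vadd X (rscal a x) (rscal b x).
Proof. unfold rscal. rewrite <- sadd_emb. apply vscal_distr_s. Qed.

Lemma norm_rscal r x : vnorm X (rscal r x) = Rabs r * vnorm X x.
Proof. unfold rscal. rewrite vnorm_scal, sabs_emb; reflexivity. Qed.

Lemma vadd_0l x : vadd X (vzero X) x = x.
Proof. rewrite vadd_comm, vadd_0; reflexivity. Qed.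

Lemma vadd_cancel x y z : vadd X x y = vadd X x z -> y = z.
Proof.
  intros H. assert (E : vadd X (vopp X x) (vadd X x y) = vadd X (vopp X x) (vadd X x z))
    by (rewrite H; reflexivity).
  rewrite !vadd_assoc, (vadd_comm X (vopp X x) x), vadd_opp, !vadd_0l in E. exact E.
Qed.

Lemma rscal_0 x : rscal 0 x = vzero X.
Proof.
  apply (vadd_cancel (rscal 0 x)). rewrite vadd_0, <- rscal_distr_s, Rplus_0_r; reflexivity.
Qed.

Lemma rscal_zero r : rscal r (vzero X) = vzero X.
Proof. rewrite <- (rscal_0 (vzero X)), rscal_assoc, Rmult_0_r; reflexivity. Qed.

Lemma vopp_rscal x : vopp X x = rscal (-1) x.
Proof.
  apply (vadd_cancel x). rewrite vadd_opp, <- (rscal_1 x) at 1.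
  rewrite <- rscal_distr_s, Rplus_opp_r, rscal_0; reflexivity.
Qed.

Lemma vopp_add x y : vopp X (vadd X x y) = vadd X (vopp X x) (vopp X y).
Proof. rewrite !vopp_rscal. apply rscal_distr_v. Qed.

Lemma norm_zero : vnorm X (vzero X) = 0.
Proof. apply vnorm_eq0; reflexivity. Qed.

Lemma norm_opp x : vnorm X (vopp X x) = vnorm X x.
Proof. rewrite vopp_rscal, norm_rscal, Rabs_left by lra; ring. Qed.

Lemma norm_nonneg x : 0 <= vnorm X x.
Proof.
  pose proof (vnorm_triangle X x (vopp X x)) as H.
  rewrite vadd_opp, norm_zero, norm_opp in H. lra.
Qed.

Lemma norm_pos x : x <> vzero X -> 0 < vnorm X x.
Proof.
  intros Hx. destruct (norm_nonneg x) as [H|H]; [exact H|].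
  exfalso; apply Hx, vnorm_eq0; auto.
Qed.

Lemma vsub_0 x : vsub X x (vzero X) = x.
Proof. unfold vsub. rewrite vopp_rscal, rscal_zero, vadd_0; reflexivity. Qed.

Lemma vsub_self x : vsub X x x = vzero X.
Proof. apply vadd_opp. Qed.

Lemma vsub_add x w : vsub X x (vadd X x w) = vopp X w.
Proof. unfold vsub. rewrite vopp_add, vadd_assoc, vadd_opp, vadd_0l; reflexivity. Qed.

Lemma norm_sub_sym x y : vnorm X (vsub X x y) = vnorm X (vsub X y x).
Proof.
  rewrite <- norm_opp. unfold vsub. rewrite vopp_add, (vopp_rscal (vopp X y)), (vopp_rscal y).
  rewrite rscal_assoc. replace (-1 * -1) with 1 by ring. rewrite rscal_1, vadd_comm; reflexivity.
Qed.

Lemma norm_sub_triangle x y z : vnorm X (vsub X x z) <= vnorm X (vsub X x y) + vnorm X (vsub X y z).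
Proof.
  replace (vsub X x z) with (vadd X (vsub X x y) (vsub X y z)); [apply vnorm_triangle|].
  unfold vsub. rewrite <- (vadd_assoc X x (vopp X y)), (vadd_assoc X (vopp X y) y).
  rewrite (vadd_comm X (vopp X y) y), vadd_opp, vadd_0l; reflexivity.
Qed.

Lemma norm_le_sub x y : vnorm X x <= vnorm X (vsub X x y) + vnorm X y.
Proof. pose proof (norm_sub_triangle x y (vzero X)) as H. rewrite !vsub_0 in H. exact H. Qed.

Lemma norm_ge_sub x y : vnorm X y - vnorm X (vsub X x y) <= vnorm X x.
Proof. pose proof (norm_le_sub y x) as H. rewrite norm_sub_sym in H. lra. Qed.

(** Every vector [x] can be lengthened by a vector of any prescribed norm [c]
    ([e] is any nonzero vector, used when [x = 0]). *)
Lemma norm_push (x e : X) (c : R) : e <> vzero X -> 0 < c ->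
  exists w, vnorm X w = c /\ vnorm X (vadd X x w) = vnorm X x + c.
Proof.
  intros He Hc. destruct (classic (x = vzero X)) as [->|Hx].
  - exists (rscal (c / vnorm X e) e). pose proof (norm_pos e He).
    assert (Hw : vnorm X (rscal (c / vnorm X e) e) = c).
    { rewrite norm_rscal, Rabs_pos_eq; [field; lra|]. apply Rlt_le, Rdiv_lt_0_compat; lra. }
    rewrite vadd_0l, norm_zero, Hw. split; [reflexivity|ring].
  - pose proof (norm_pos x Hx) as Hpos. set (a := vnorm X x) in *.
    assert (Hca : 0 < c / a) by (apply Rdiv_lt_0_compat; lra).
    exists (rscal (c / a) x). split.
    + rewrite norm_rscal, Rabs_pos_eq by lra. fold a. field; lra.
    + rewrite <- (rscal_1 x) at 1. rewrite <- rscal_distr_s, norm_rscal, Rabs_pos_eq by lra.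
      fold a. field; lra.
Qed.

End VectorAlgebra.

Arguments rscal {k} X r x.

Lemma le_mult_of_div_le a b r : 0 < r -> a / r <= b -> a <= r * b.
Proof.
  intros Hr H. apply Rmult_le_compat_l with (r := r) in H; [|lra]. field_simplify in H; lra.
Qed.

Lemma inv_succ_pos (n : nat) : 0 < / (INR n + 1).
Proof. apply Rinv_0_lt_compat. pose proof (pos_INR n). lra. Qed.

Lemma inv_succ_small eps : eps > 0 -> exists N : nat, forall n, (n >= N)%nat -> / (INR n + 1) < eps.
Proof.
  intros He. destruct (archimed_cor1 eps He) as [N [H1 H2]]. exists N. intros n Hn.
  apply le_INR in Hn. apply lt_INR in H2. simpl in H2.
  eapply Rle_lt_trans; [|exact H1]. apply Rinv_le_contravar; lra.
Qed.

Lemma halving_small (r : nat -> R) : (forall n, 0 < r n) -> (forall n, r (S n) <= r n / 2) ->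
  forall e, e > 0 -> exists N, forall n, (n >= N)%nat -> r n < e.
Proof.
  intros Hr Hhalf e He.
  assert (Hdecay : forall n, r n * (INR n + 1) <= r 0%nat).
  { induction n as [|n IH]; [simpl; lra|]. rewrite S_INR.
    pose proof (Hhalf n). pose proof (Hr n). pose proof (pos_INR n). nra. }
  pose proof (Hr 0%nat) as Hr0.
  destruct (inv_succ_small (e / r 0%nat)) as [N HN]; [apply Rdiv_lt_0_compat; lra|].
  exists N. intros n Hn. specialize (HN n Hn). pose proof (Hdecay n) as Hdn.
  pose proof (inv_succ_pos n) as Hinv. pose proof (pos_INR n).
  apply (Rmult_lt_compat_l (r 0%nat)) in HN; [|lra].
  replace (r 0%nat * (e / r 0%nat)) with e in HN by (field; lra).
  apply (Rmult_le_compat_r (/ (INR n + 1))) in Hdn; [|lra].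
  rewrite Rmult_assoc, Rinv_r, Rmult_1_r in Hdn by lra. lra.
Qed.

Definition inf_over {I : Type} (S : I -> Prop) (F : I -> R) : R :=
  - epsilon (inhabits 0) (is_lub (fun r => exists i, S i /\ - r = F i)).

Lemma inf_over_spec {I : Type} (S : I -> Prop) (F : I -> R) (i0 : I) (b : R) :
  S i0 -> (forall i, S i -> b <= F i) ->
  (forall i, S i -> inf_over S F <= F i) /\
  (forall c, (forall i, S i -> c <= F i) -> c <= inf_over S F).
Proof.
  intros Hi0 Hb. set (E := fun r => exists i, S i /\ - r = F i).
  assert (Hlub : exists m, is_lub E m).
  { destruct (completeness E) as [m Hm].
    - exists (- b). intros r [i [Hi Hr]]. specialize (Hb i Hi). lra.
    - exists (- F i0), i0. split; [exact Hi0 | ring].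
    - exists m; exact Hm. }
  destruct (epsilon_spec (inhabits 0) _ Hlub) as [Hub Hleast].
  unfold inf_over. fold E. split.
  - intros i Hi. assert (HE : E (- F i)) by (exists i; split; [exact Hi | ring]).
    specialize (Hub _ HE). lra.
  - intros c Hc. assert (Hc' : is_upper_bound E (- c)).
    { intros r [i [Hi Hr]]. specialize (Hc i Hi). lra. }
    specialize (Hleast _ Hc'). lra.
Qed.

(** The library version for preorders on a type, restated for the elements of a
    predicate [P]; only nonempty chains need an upper bound in [P]. *)

Lemma zorn_pred {T : Type} (P : T -> Prop) (le : T -> T -> Prop) (t0 : T) :
  P t0 -> (forall x, le x x) -> (forall x y z, le x y -> le y z -> le x z) ->
  (forall C : T -> Prop, (exists c, C c) -> (forall x, C x -> P x) ->
     (forall x y, C x -> C y -> le x y \/ le y x) -> exists m, P m /\ forall x, C x -> le x m) ->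
  exists m, P m /\ forall x, P x -> le m x -> le x m.
Proof.
  intros Ht0 Hrefl Htrans Hchain.
  set (R' := fun a b : {x | P x} => boolp.asbool (le (proj1_sig a) (proj1_sig b))).
  assert (HR' : forall a b, is_true (R' a b) = le (proj1_sig a) (proj1_sig b) :> Prop)
    by (intros; apply (boolp.asboolE (le _ _))).
  destruct (@classical_sets.ZL_preorder _ (exist P t0 Ht0) R') as [[m Hm] Hmax].
  - intros a. rewrite HR'. apply Hrefl.
  - intros a b c. rewrite !HR'. apply Htrans.
  - intros A HA. destruct (classic (exists a, A a)) as [[[a0 Ha0] HA0] | Hempty].
    + destruct (Hchain (fun x => exists Hx : P x, A (exist P x Hx))) as [m [Hm Hub]].
      * exists a0, Ha0; exact HA0.
      * intros x [Hx _]; exact Hx.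
      * intros x y [Hx Ax] [Hy Ay]. specialize (HA _ _ Ax Ay). simpl in HA.
        rewrite !HR' in HA. exact HA.
      * exists (exist P m Hm). intros [x Hx] Ax. rewrite HR'. apply Hub. exists Hx; exact Ax.
    + exists (exist P t0 Ht0). intros a Aa. exfalso; apply Hempty; exists a; exact Aa.
  - exists m. split; [exact Hm|]. intros x Hx Hmx.
    specialize (Hmax (exist P x Hx)). unfold classical_sets.premaximal in Hmax.
    rewrite !HR' in Hmax. exact (Hmax Hmx).
Qed.

(** * The Hahn-Banach theorem: norming real-linear functionals *)

Section HahnBanach.
Variables (k : scalar_field) (X : NormedSpace (scalars k)).

Definition sublinear (q : X -> R) : Prop :=
  (forall x x', q (vadd X x x') <= q x + q x') /\
  (forall r x, 0 < r -> q (rscal X r x) <= r * q x).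

Lemma norm_sublinear : sublinear (vnorm X).
Proof.
  split; [apply vnorm_triangle|]. intros r x Hr. rewrite norm_rscal, Rabs_pos_eq by lra. lra.
Qed.

Lemma sublinear_zero q : sublinear q -> q (vzero X) = 0.
Proof.
  intros [_ Hhom]. pose proof (Hhom 2 (vzero X) ltac:(lra)).
  pose proof (Hhom (/ 2) (vzero X) ltac:(lra)). rewrite rscal_zero in *. lra.
Qed.

Lemma sublinear_hom q r x : sublinear q -> 0 <= r -> q (rscal X r x) = r * q x.
Proof.
  intros Hq Hr. destruct (Req_dec r 0) as [->|Hne].
  - rewrite rscal_0, sublinear_zero by exact Hq. ring.
  - pose proof (proj2 Hq r x ltac:(lra)) as Hle.
    pose proof (proj2 Hq (/ r) (rscal X r x) ltac:(apply Rinv_0_lt_compat; lra)) as Hge.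
    rewrite rscal_assoc, Rinv_l, rscal_1 in Hge by exact Hne.
    apply Rmult_le_compat_l with (r := r) in Hge; [|lra].
    rewrite <- Rmult_assoc, Rinv_r, Rmult_1_l in Hge by exact Hne. lra.
Qed.

Lemma sublinear_opp q x : sublinear q -> - q (vopp X x) <= q x.
Proof.
  intros Hq. pose proof (proj1 Hq x (vopp X x)) as H.
  rewrite vadd_opp, sublinear_zero in H by exact Hq. lra.
Qed.

Lemma additive_sublinear_linear q : sublinear q ->
  (forall x x', q (vadd X x x') = q x + q x') -> forall r x, q (rscal X r x) = r * q x.
Proof.
  intros Hq Hadd r x.
  assert (Hopp : forall z, q (vopp X z) = - q z).
  { intros z. pose proof (Hadd z (vopp X z)). rewrite vadd_opp, sublinear_zero in H by exact Hq.
    lra. }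
  destruct (Rle_dec 0 r) as [Hr|Hr]; [apply sublinear_hom; assumption|].
  replace (rscal X r x) with (vopp X (rscal X (- r) x)).
  - rewrite Hopp, sublinear_hom by (assumption || lra). ring.
  - rewrite vopp_rscal, rscal_assoc. f_equal. ring.
Qed.

Definition shift (q : X -> R) (z x : X) : R :=
  inf_over (fun t => 0 <= t) (fun t => q (vadd X x (rscal X t z)) - t * q z).

Section Shift.
Variables (q : X -> R) (z : X).
Hypothesis Hq : sublinear q.

Lemma shift_bounds x :
  (forall t, 0 <= t -> shift q z x <= q (vadd X x (rscal X t z)) - t * q z) /\
  (forall c, (forall t, 0 <= t -> c <= q (vadd X x (rscal X t z)) - t * q z) -> c <= shift q z x).
Proof.
  apply (inf_over_spec _ _ 0 (- q (vopp X x))); [lra|]. intros t Ht.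
  pose proof (proj1 Hq (vadd X x (rscal X t z)) (vopp X x)) as H.
  replace (vadd X (vadd X x (rscal X t z)) (vopp X x)) with (rscal X t z) in H.
  - rewrite sublinear_hom in H by assumption. lra.
  - rewrite (vadd_comm X x), <- vadd_assoc, vadd_opp, vadd_0; reflexivity.
Qed.

Lemma shift_le x t : 0 <= t -> shift q z x <= q (vadd X x (rscal X t z)) - t * q z.
Proof. apply shift_bounds. Qed.

Lemma shift_ge x c :
  (forall t, 0 <= t -> c <= q (vadd X x (rscal X t z)) - t * q z) -> c <= shift q z x.
Proof. apply shift_bounds. Qed.

Lemma shift_below x : shift q z x <= q x.
Proof. pose proof (shift_le x 0 (Rle_refl 0)) as H. rewrite rscal_0, vadd_0 in H. lra. Qed.

Lemma shift_sublinear : sublinear (shift q z).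
Proof.
  split.
  - intros x x'.
    assert (H : forall t t', 0 <= t -> 0 <= t' -> shift q z (vadd X x x')
        <= (q (vadd X x (rscal X t z)) - t * q z) + (q (vadd X x' (rscal X t' z)) - t' * q z)).
    { intros t t' Ht Ht'. pose proof (shift_le (vadd X x x') (t + t') ltac:(lra)) as Hs.
      replace (vadd X (vadd X x x') (rscal X (t + t') z))
        with (vadd X (vadd X x (rscal X t z)) (vadd X x' (rscal X t' z))) in Hs.
      - pose proof (proj1 Hq (vadd X x (rscal X t z)) (vadd X x' (rscal X t' z))). lra.
      - rewrite rscal_distr_s, !vadd_assoc. f_equal. rewrite <- !vadd_assoc. f_equal.
        apply vadd_comm. }
    assert (H' : forall t', 0 <= t' ->
        shift q z (vadd X x x') - shift q z x <= q (vadd X x' (rscal X t' z)) - t' * q z).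
    { intros t' Ht'. enough (shift q z (vadd X x x') - (q (vadd X x' (rscal X t' z)) - t' * q z)
        <= shift q z x) by lra.
      apply shift_ge. intros t Ht. specialize (H t t' Ht Ht'). lra. }
    enough (shift q z (vadd X x x') - shift q z x <= shift q z x') by lra.
    apply shift_ge; exact H'.
  - intros r x Hr.
    apply le_mult_of_div_le; [exact Hr|].
    apply shift_ge. intros t Ht.
    pose proof (shift_le (rscal X r x) (r * t) ltac:(nra)) as Hs.
    rewrite <- rscal_assoc, <- rscal_distr_v, (sublinear_hom q) in Hs by (assumption || lra).
    apply (Rmult_le_reg_l r); [lra|]. field_simplify; lra.
Qed.

End Shift.

Section NormingFunctional.
Variable y : X.

(** Zorn's lemma is applied to the sublinear functionals lying below [shift ‖.‖ y],
    ordered by the reverse pointwise order; its minimal elements are linear. *)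
Definition below_shift (q : X -> R) : Prop :=
  sublinear q /\ forall x, q x <= shift (vnorm X) y x.

Definition dominated (q1 q2 : X -> R) : Prop := forall x, q2 x <= q1 x.

Lemma below_shift_lower q x : below_shift q -> - vnorm X x <= q x.
Proof.
  intros [Hq Hle]. pose proof (sublinear_opp q x Hq). pose proof (Hle (vopp X x)).
  pose proof (shift_below (vnorm X) y norm_sublinear (vopp X x)). rewrite norm_opp in *. lra.
Qed.

Lemma chain_infimum (C : (X -> R) -> Prop) : (exists c, C c) -> (forall q, C q -> below_shift q) ->
  (forall q q', C q -> C q' -> dominated q q' \/ dominated q' q) ->
  exists m, below_shift m /\ forall q, C q -> dominated q m.
Proof.
  intros [q0 Hq0] HC Hchain.
  set (m := fun x => inf_over C (fun q => q x)).
  assert (Hm : forall x, (forall q, C q -> m x <= q x) /\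
                         (forall c, (forall q, C q -> c <= q x) -> c <= m x)).
  { intros x. apply (inf_over_spec C (fun q => q x) q0 (- vnorm X x) Hq0).
    intros q Hq. apply below_shift_lower, HC, Hq. }
  exists m. split; [split; [split|] |].
  - intros x x'.
    assert (H : forall q q', C q -> C q' -> m (vadd X x x') <= q x + q' x').
    { intros q q' Hq Hq'. pose proof (proj1 (proj1 (HC q Hq)) x x').
      pose proof (proj1 (proj1 (HC q' Hq')) x x').
      pose proof (proj1 (Hm (vadd X x x')) q Hq). pose proof (proj1 (Hm (vadd X x x')) q' Hq').
      destruct (Hchain q q' Hq Hq') as [Hd|Hd]; [specialize (Hd x) | specialize (Hd x')]; lra. }
    enough (m (vadd X x x') - m x <= m x') by lra.
    apply (proj2 (Hm x')). intros q' Hq'.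
    enough (m (vadd X x x') - q' x' <= m x) by lra.
    apply (proj2 (Hm x)). intros q Hq. specialize (H q q' Hq Hq'). lra.
  - intros r x Hr.
    apply le_mult_of_div_le; [exact Hr|].
    apply (proj2 (Hm x)). intros q Hq. pose proof (proj1 (Hm (rscal X r x)) q Hq).
    pose proof (proj2 (proj1 (HC q Hq)) r x Hr).
    apply (Rmult_le_reg_l r); [lra|]. field_simplify; lra.
  - intros x. pose proof (proj1 (Hm x) q0 Hq0). pose proof (proj2 (HC q0 Hq0) x). lra.
  - intros q Hq x. apply (proj1 (Hm x) q Hq).
Qed.

(** A minimal candidate is additive: shifting it along any [z] cannot lower it. *)
Lemma minimal_additive m : below_shift m ->
  (forall q, below_shift q -> dominated m q -> dominated q m) ->
  forall x z, m (vadd X x z) = m x + m z.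
Proof.
  intros [Hm Hle] Hmin x z.
  assert (Hshift : dominated (shift m z) m).
  { apply Hmin.
    - split; [apply shift_sublinear, Hm|]. intros w.
      pose proof (shift_below m z Hm w). pose proof (Hle w). lra.
    - intros w. apply shift_below, Hm. }
  pose proof (Hshift x). pose proof (shift_le m z Hm x 1 ltac:(lra)).
  pose proof (proj1 Hm x z). rewrite rscal_1 in *. lra.
Qed.

End NormingFunctional.

Theorem hahn_banach_norming (y : X) : exists u : X -> R,
  (forall x x', u (vadd X x x') = u x + u x') /\ (forall r x, u (rscal X r x) = r * u x) /\
  (forall x, Rabs (u x) <= vnorm X x) /\ u y = vnorm X y.
Proof.
  destruct (zorn_pred (below_shift y) dominated (shift (vnorm X) y)) as [m [[Hm Hle] Hmin]].
  - split; [apply shift_sublinear, norm_sublinear | intros x; apply Rle_refl].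
  - intros q x; apply Rle_refl.
  - intros q1 q2 q3 H12 H23 x. specialize (H12 x). specialize (H23 x). lra.
  - apply chain_infimum.
  - assert (Hadd : forall x z, m (vadd X x z) = m x + m z)
      by (apply (minimal_additive y); [split|]; assumption).
    assert (Hlin := additive_sublinear_linear m Hm Hadd).
    assert (Hopp : forall x, m (vopp X x) = - m x) by (intros x; rewrite vopp_rscal, Hlin; ring).
    assert (Hnorm : forall x, m x <= vnorm X x).
    { intros x. pose proof (Hle x). pose proof (shift_below (vnorm X) y norm_sublinear x). lra. }
    exists m. split; [exact Hadd | split; [exact Hlin | split]].
    + intros x. apply Rabs_le. pose proof (Hnorm x). pose proof (Hnorm (vopp X x)).
      rewrite Hopp, norm_opp in *. lra.
    + (* m (-y) <= shift ‖.‖ y (-y) <= ‖-y + y‖ - ‖y‖ = - ‖y‖ *)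
      pose proof (Hle (vopp X y)) as Hy.
      pose proof (shift_le (vnorm X) y norm_sublinear (vopp X y) 1 ltac:(lra)) as Hs.
      rewrite rscal_1, vadd_comm, vadd_opp, norm_zero in Hs.
      rewrite Hopp in Hy. pose proof (Hnorm y). lra.
Qed.

End HahnBanach.

Section Complexification.
Variables (X : NormedSpace (scalars ComplexField)) (u : X -> R).
Hypothesis u_add : forall x x', u (vadd X x x') = u x + u x'.
Hypothesis u_hom : forall r x, u (rscal X r x) = r * u x.
Hypothesis u_bound : forall x, Rabs (u x) <= vnorm X x.

Let iX (x : X) : X := vscal X (0, 1) x.

(** [x |-> u x - i u (i x)]: the complex-linear functional with real part [u]. *)
Definition complexify (x : X) : scalars ComplexField := (u x, - u (iX x)).

Lemma u_scal a b x : u (vscal X (a, b) x) = a * u x + b * u (iX x).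
Proof.
  replace (vscal X (a, b) x) with (vadd X (rscal X a x) (rscal X b (iX x))).
  - rewrite u_add, !u_hom; reflexivity.
  - unfold rscal, iX. rewrite vscal_assoc, <- vscal_distr_s. f_equal.
    simpl. unfold Cmul, Cadd; simpl. apply pair_eq; ring.
Qed.

Lemma complexify_scal c x : complexify (vscal X c x) = smul _ c (complexify x).
Proof.
  destruct c as [a b]. unfold complexify.
  replace (iX (vscal X (a, b) x)) with (vscal X (- b, a) x).
  - rewrite !u_scal. simpl. unfold Cmul; simpl. apply pair_eq; ring.
  - unfold iX. rewrite vscal_assoc. f_equal. simpl. unfold Cmul; simpl. apply pair_eq; ring.
Qed.

Lemma complexify_add x x' : complexify (vadd X x x') = sadd _ (complexify x) (complexify x').
Proof.
  unfold complexify, iX. rewrite vscal_distr_v, !u_add. simpl. unfold Cadd; simpl.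
  apply pair_eq; ring.
Qed.

(** The bound: rotating [x] so that [complexify x] becomes real and positive. *)
Lemma complexify_bound x : sabs _ (complexify x) <= vnorm X x.
Proof.
  destruct (complexify x) as [a b] eqn:Ex. set (rho := sabs (scalars ComplexField) (a, b)).
  assert (Hrho2 : rho * rho = a * a + b * b).
  { unfold rho; simpl; unfold Cabs; simpl. rewrite sqrt_sqrt by nra. ring. }
  pose proof (norm_nonneg _ X x) as Hx.
  destruct (sabs_nonneg ComplexField (a, b)) as [Hpos|H0]; [|fold rho in H0; lra].
  fold rho in Hpos.
  set (w := ((a / rho, - b / rho) : scalars ComplexField)).
  assert (Hw : sabs _ w = 1).
  { change (sqrt ((a / rho) ^ 2 + (- b / rho) ^ 2) = 1).
    replace ((a / rho) ^ 2 + (- b / rho) ^ 2) with 1; [apply sqrt_1|].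
    apply (Rmult_eq_reg_l (rho * rho)); [|nra]. field_simplify; [|lra]. nra. }
  assert (Hu : u (vscal X w x) = rho).
  { pose proof (complexify_scal w x) as H. rewrite Ex in H. unfold complexify in H.
    injection H as H _. apply (eq_trans H). apply (Rmult_eq_reg_l rho); [|lra].
    field_simplify; [|lra]. nra. }
  pose proof (u_bound (vscal X w x)) as Hb.
  rewrite Hu, vnorm_scal, Hw, Rabs_pos_eq in Hb by lra. lra.
Qed.

End Complexification.

Lemma norming_functional (k : scalar_field) (X : NormedSpace (scalars k)) (y : X) :
  exists phi : X -> scalars k,
    is_dual X phi /\ (forall x, sabs _ (phi x) <= vnorm X x) /\ phi y = emb k (vnorm X y).
Proof.
  destruct (hahn_banach_norming k X y) as [u [Hadd [Hhom [Hb Hy]]]].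
  destruct k.
  - exists u. split; [split; [exact Hadd | split; [exact Hhom|]] | split; [exact Hb | exact Hy]].
    exists 1. intros x. rewrite Rmult_1_l. apply Hb.
  - exists (complexify X u). pose proof (complexify_bound X u Hadd Hhom Hb) as Hbound.
    split; [split; [|split] | split; [exact Hbound|]].
    + apply complexify_add, Hadd.
    + apply complexify_scal; assumption.
    + exists 1. intros x. rewrite Rmult_1_l. apply Hbound.
    + (* the imaginary part of [complexify y] vanishes since its real part is already [‖y‖] *)
      pose proof (Hbound y) as H. unfold complexify in *. rewrite Hy in *.
      apply pair_eq; [reflexivity|]. apply (Cabs_real_part _ _ H).
Qed.

Section SupNorm.
Variables (k : scalar_field) (K : MetricSpace) (X : NormedSpace (scalars k)).
Implicit Types f g h : K -> X.

Lemma sup_lub f : fbounded f -> is_lub (fun r => r = 0 \/ exists t, r = vnorm X (f t)) (sup_norm f).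
Proof.
  intros [M HM]. unfold sup_norm. apply epsilon_spec.
  destruct (completeness (fun r => r = 0 \/ exists t, r = vnorm X (f t))) as [m Hm].
  - exists (Rmax M 0). intros r [->|[t ->]]; [apply Rmax_r|].
    eapply Rle_trans; [apply HM | apply Rmax_l].
  - exists 0; left; reflexivity.
  - exists m; exact Hm.
Qed.

Lemma sup_ge f t : fbounded f -> vnorm X (f t) <= sup_norm f.
Proof. intros H. apply (sup_lub f H). right; exists t; reflexivity. Qed.

Lemma sup_nonneg f : fbounded f -> 0 <= sup_norm f.
Proof. intros H. apply (sup_lub f H). left; reflexivity. Qed.

Lemma sup_le f b : (forall t, vnorm X (f t) <= b) -> 0 <= b -> sup_norm f <= b.
Proof. intros H Hb. apply (sup_lub f (ex_intro _ b H)). intros r [->|[t ->]]; auto. Qed.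

(** The supremum is approached (K is nonempty as soon as one point [t0] is given). *)
Lemma sup_approx f (t0 : K) eps : fbounded f -> eps > 0 ->
  exists t, vnorm X (f t) > sup_norm f - eps.
Proof.
  intros Hf He. apply NNPP; intro Hn.
  assert (H : forall t, vnorm X (f t) <= sup_norm f - eps).
  { intros t. apply Rnot_lt_le. intro. apply Hn. exists t. lra. }
  pose proof (sup_le f _ H). pose proof (H t0). pose proof (norm_nonneg _ X (f t0)). lra.
Qed.

Lemma bnd_sub f g : fbounded f -> fbounded g -> fbounded (fsub f g).
Proof.
  intros [M HM] [N HN]. exists (M + N). intros t. unfold fsub, vsub.
  eapply Rle_trans; [apply vnorm_triangle|]. rewrite norm_opp.
  specialize (HM t); specialize (HN t); lra.
Qed.

Lemma sup_sub_sym f g : sup_norm (fsub f g) = sup_norm (fsub g f).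
Proof.
  unfold sup_norm, fsub.
  replace (fun r => r = 0 \/ exists t, r = vnorm X (vsub X (f t) (g t)))
    with (fun r => r = 0 \/ exists t, r = vnorm X (vsub X (g t) (f t))); [reflexivity|].
  apply functional_extensionality; intro r.
  apply propositional_extensionality.
  split; intros [H|[t H]]; auto; right; exists t; rewrite H; apply norm_sub_sym.
Qed.

Lemma sup_sub_ge f g t : fbounded f -> fbounded g ->
  vnorm X (vsub X (f t) (g t)) <= sup_norm (fsub f g).
Proof. intros Hf Hg. apply (sup_ge (fsub f g) t (bnd_sub f g Hf Hg)). Qed.

Lemma sup_diff f g : fbounded f -> fbounded g -> sup_norm f <= sup_norm (fsub f g) + sup_norm g.
Proof.
  intros Hf Hg. pose proof (sup_nonneg _ (bnd_sub f g Hf Hg)). pose proof (sup_nonneg g Hg).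
  apply sup_le; [|lra]. intros t. pose proof (norm_le_sub _ X (f t) (g t)).
  pose proof (sup_sub_ge f g t Hf Hg). pose proof (sup_ge g t Hg). lra.
Qed.

Lemma maximizing_of_rate f (u : nat -> K) : fbounded f ->
  (forall n, vnorm X (f (u n)) > sup_norm f - / (INR n + 1)) ->
  Un_cv (fun n => vnorm X (f (u n))) (sup_norm f).
Proof.
  intros Hf Hu eps He. destruct (inv_succ_small eps He) as [N HN].
  exists N. intros n Hn. unfold R_dist. specialize (HN n Hn). specialize (Hu n).
  pose proof (sup_ge f (u n) Hf). rewrite Rabs_left1 by lra. lra.
Qed.

Lemma maximizing_seq f (t0 : K) : fbounded f -> exists u : nat -> K,
  Un_cv (fun n => vnorm X (f (u n))) (sup_norm f) /\
  forall n, vnorm X (f (u n)) > sup_norm f - / (INR n + 1).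
Proof.
  intros Hf.
  destruct (choice (fun (n : nat) (t : K) => vnorm X (f t) > sup_norm f - / (INR n + 1)))
    as [u Hu].
  { intros n. apply (sup_approx f t0); [exact Hf | apply inv_succ_pos]. }
  exists u. split; [apply maximizing_of_rate|]; assumption.
Qed.

Lemma peak_attains f t : strong_peak_at f t -> vnorm X (f t) = sup_norm f.
Proof.
  intros [[Hc Hb] [[s0 _] Hp]].
  destruct (maximizing_seq f s0 Hb) as [u [Hu1 Hu2]]. specialize (Hp u Hu1).
  pose proof (sup_ge f t Hb). apply NNPP; intro Hne.
  set (d := sup_norm f - vnorm X (f t)). assert (Hd : d > 0) by (unfold d; lra).
  destruct (Hc t (d / 2) ltac:(lra)) as [de [Hde Hcd]].
  destruct (Hp de Hde) as [N1 HN1]. destruct (inv_succ_small (d / 2) ltac:(lra)) as [N2 HN2].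
  set (n := max N1 N2).
  specialize (HN1 n (Nat.le_max_l _ _)). specialize (HN2 n (Nat.le_max_r _ _)).
  specialize (Hcd (u n) HN1). specialize (Hu2 n).
  pose proof (norm_le_sub _ X (f (u n)) (f t)). unfold d in *. lra.
Qed.

Lemma peak_nonzero_norm f t : strong_peak_at f t -> 0 < sup_norm f.
Proof.
  intros [[_ Hb] [[s Hs] _]]. pose proof (norm_pos _ X _ Hs). pose proof (sup_ge f s Hb). lra.
Qed.

Lemma peak_separated f t r : strong_peak_at f t -> r > 0 ->
  exists eta, eta > 0 /\ forall s, mdist K s t >= r -> vnorm X (f s) <= sup_norm f - eta.
Proof.
  intros [[_ Hb] [_ Hp]] Hr. apply NNPP; intro Hnot.
  assert (H : forall n : nat,
      exists s, mdist K s t >= r /\ vnorm X (f s) > sup_norm f - / (INR n + 1)).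
  { intros n. apply NNPP; intro Hm. apply Hnot. exists (/ (INR n + 1)).
    split; [apply inv_succ_pos|]. intros s Hs. apply Rnot_lt_le. intro.
    apply Hm. exists s. split; [exact Hs | lra]. }
  destruct (choice _ H) as [u Hu].
  assert (Hcv : Un_cv (fun n => vnorm X (f (u n))) (sup_norm f))
    by (apply maximizing_of_rate; [exact Hb | intros n; apply Hu]).
  destruct (Hp u Hcv r Hr) as [N HN]. specialize (HN N (le_n _)). specialize (Hu N). lra.
Qed.

End SupNorm.

Section Concentration.
Variables (k : scalar_field) (K : MetricSpace) (X : NormedSpace (scalars k)).
Implicit Types f g h : K -> X.

Definition concentrated (n : nat) (f : K -> X) : Prop :=
  (exists s, f s <> vzero X) /\
  exists de, de > 0 /\ exists c : K,
    forall t, vnorm X (f t) > sup_norm f - de -> mdist K t c < / (INR n + 1).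

Lemma concentrated_open (A : (K -> X) -> Prop) n :
  (forall f, A f -> fbounded f) -> open_in (concentrated n) A.
Proof.
  intros HAb f Hf [[s0 Hs0] [de [Hde [c Hc]]]].
  pose proof (norm_pos _ X _ Hs0) as Hpos.
  pose proof (Rmin_l (de / 3) (vnorm X (f s0))) as Hrad1.
  pose proof (Rmin_r (de / 3) (vnorm X (f s0))) as Hrad2.
  set (rad := Rmin (de / 3) (vnorm X (f s0))) in *.
  exists rad. split; [apply Rmin_glb_lt; lra|]. intros g Hg Hgf.
  pose proof (HAb f Hf) as Bf. pose proof (HAb g Hg) as Bg.
  assert (Hpt : forall t, vnorm X (vsub X (f t) (g t)) < rad).
  { intros t. rewrite norm_sub_sym. eapply Rle_lt_trans; [apply sup_sub_ge|]; eassumption. }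
  split.
  - exists s0. intro E. specialize (Hpt s0). rewrite E, vsub_0 in Hpt. lra.
  - exists (de / 3). split; [lra|]. exists c. intros t Ht. apply Hc.
    pose proof (sup_diff k K X f g Bf Bg) as Hsup. rewrite sup_sub_sym in Hsup.
    pose proof (norm_ge_sub _ X (f t) (g t)). specialize (Hpt t). lra.
Qed.

Lemma peak_concentrated f t n : strong_peak_at f t -> concentrated n f.
Proof.
  intros Hpk. split; [apply Hpk|].
  destruct (peak_separated k K X f t (/ (INR n + 1)) Hpk (inv_succ_pos n)) as [eta [He Hs]].
  exists eta. split; [exact He|]. exists t. intros s Hs'.
  apply Rnot_le_lt. intro H. specialize (Hs s (Rle_ge _ _ H)). lra.
Qed.

(** Conversely, on a complete [K] the centres of the shrinking balls converge to a peak point. *)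
Lemma concentrated_peak f : complete_metric K -> in_Cb f ->
  (forall n, concentrated n f) -> strong_peak_fun f.
Proof.
  intros HK Hf HU. pose proof (proj2 Hf) as Bf.
  destruct (HU 0%nat) as [[s0 Hs0] _].
  destruct (choice (fun n dc => fst dc > 0 /\
      forall t, vnorm X (f t) > sup_norm f - fst dc -> mdist K t (snd dc) < / (INR n + 1)))
    as [dc Hdc].
  { intros n. destruct (HU n) as [_ [de [Hde [c Hc]]]]. exists (de, c); split; assumption. }
  (* two top level sets meet, so their centres are close: the centres form a Cauchy sequence *)
  assert (Hclose : forall n m, mdist K (snd (dc n)) (snd (dc m)) < / (INR n + 1) + / (INR m + 1)).
  { intros n m. destruct (Hdc n) as [Hn1 Hn2]. destruct (Hdc m) as [Hm1 Hm2].
    pose proof (Rmin_l (fst (dc n)) (fst (dc m))). pose proof (Rmin_r (fst (dc n)) (fst (dc m))).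
    destruct (sup_approx k K X f s0 (Rmin (fst (dc n)) (fst (dc m))) Bf) as [t Ht];
      [apply Rmin_glb_lt; assumption|].
    assert (mdist K t (snd (dc n)) < / (INR n + 1)) by (apply Hn2; lra).
    assert (mdist K t (snd (dc m)) < / (INR m + 1)) by (apply Hm2; lra).
    pose proof (@Defs.dist_tri K (snd (dc n)) t (snd (dc m))).
    pose proof (@Defs.dist_sym K t (snd (dc n))).
    lra. }
  destruct (HK (fun n => snd (dc n))) as [t0 Ht0].
  { intros eps He. destruct (inv_succ_small (eps / 2) ltac:(lra)) as [N HN]. exists N.
    intros n m Hn Hm. specialize (Hclose n m). pose proof (HN n Hn). pose proof (HN m Hm). lra. }
  exists t0. split; [exact Hf | split; [exists s0; exact Hs0|]].
  intros u Hu eps He.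
  destruct (Ht0 (eps / 3) ltac:(lra)) as [M HM].
  destruct (inv_succ_small (eps / 3) ltac:(lra)) as [M2 HM2].
  set (n := max M M2). specialize (HM n (Nat.le_max_l _ _)). specialize (HM2 n (Nat.le_max_r _ _)).
  destruct (Hdc n) as [Hn1 Hn2]. destruct (Hu (fst (dc n)) Hn1) as [J HJ].
  exists J. intros j Hj. specialize (HJ j Hj). unfold R_dist in HJ. apply Rabs_def2 in HJ.
  assert (mdist K (u j) (snd (dc n)) < / (INR n + 1)) by (apply Hn2; lra).
  pose proof (@Defs.dist_tri K (u j) (snd (dc n)) t0). simpl in HM. lra.
Qed.

End Concentration.

(** * The Baire category theorem in a closed subspace of C_b(K:X) *)

Section Baire.
Variables (k : scalar_field) (K : MetricSpace) (X : NormedSpace (scalars k)).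
Variable A : (K -> X) -> Prop.
Hypothesis HX : Banach X.
Hypothesis HA : closed_subspace A.

Lemma closed_subspace_bounded f : A f -> fbounded f.
Proof. intros Hf. apply (proj1 HA f Hf). Qed.

Lemma uniform_limit (fs : nat -> K -> X) (r : nat -> R) :
  (forall n, A (fs n)) -> (forall n, 0 < r n) -> (forall n, r (S n) <= r n / 2) ->
  (forall n, sup_norm (fsub (fs n) (fs (S n))) <= r n) ->
  exists F, A F /\ forall n, sup_norm (fsub F (fs n)) <= 2 * r n.
Proof.
  intros HAf Hr Hhalf Hstep.
  assert (Hpt : forall n t, vnorm X (vsub X (fs n t) (fs (S n) t)) <= r n).
  { intros n t. eapply Rle_trans; [apply sup_sub_ge|apply Hstep];
      apply closed_subspace_bounded, HAf. }
  assert (Htail : forall m n t, vnorm X (vsub X (fs n t) (fs (n + m)%nat t)) <= 2 * r n).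
  { induction m as [|m IH]; intros n t.
    - rewrite Nat.add_0_r, vsub_self, norm_zero. pose proof (Hr n). lra.
    - rewrite <- plus_n_Sm. change (S (n + m)) with (S n + m)%nat.
      eapply Rle_trans; [apply (norm_sub_triangle _ X _ (fs (S n) t))|].
      pose proof (Hpt n t). pose proof (IH (S n) t). pose proof (Hhalf n). lra. }
  assert (Hsmall : forall e, e > 0 -> exists N, forall n, (n >= N)%nat -> 2 * r n < e).
  { intros e He. destruct (halving_small r Hr Hhalf (e / 2) ltac:(lra)) as [N HN].
    exists N. intros n Hn. specialize (HN n Hn). lra. }
  assert (Hcauchy : forall t, exists l, forall e, e > 0 -> exists N, forall n, (n >= N)%nat ->
      vnorm X (vsub X (fs n t) l) < e).
  { intros t. apply HX. intros e He. destruct (Hsmall e He) as [N HN]. exists N.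
    intros n m Hn Hm. destruct (Nat.le_ge_cases n m) as [Hnm|Hnm].
    - replace m with (n + (m - n))%nat by lia. pose proof (Htail (m - n)%nat n t).
      pose proof (HN n Hn). lra.
    - rewrite norm_sub_sym. replace n with (m + (n - m))%nat by lia.
      pose proof (Htail (n - m)%nat m t). pose proof (HN m Hm). lra. }
  destruct (choice _ Hcauchy) as [F HF].
  assert (Hlim : forall n t, vnorm X (vsub X (fs n t) (F t)) <= 2 * r n).
  { intros n t. apply Rle_plus_epsilon. intros e He. destruct (HF t e He) as [N HN].
    set (j := max n N). specialize (HN j (Nat.le_max_r _ _)).
    pose proof (Htail (j - n)%nat n t) as Hnj.
    replace (n + (j - n))%nat with j in Hnj by (unfold j; lia).
    pose proof (norm_sub_triangle _ X (fs n t) (fs j t) (F t)). lra. }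
  exists F. split.
  - apply (proj2 (proj2 (proj2 (proj2 HA))) fs F HAf).
    intros e He. destruct (Hsmall e He) as [N HN]. exists N. intros n t Hn.
    pose proof (Hlim n t). pose proof (HN n Hn). lra.
  - intros n. apply sup_le; [|pose proof (Hr n); lra].
    intros t. unfold fsub. rewrite norm_sub_sym. apply Hlim.
Qed.

Section DenseOpen.
Variable U : nat -> (K -> X) -> Prop.
Hypothesis U_open : forall n, open_in (U n) A.
Hypothesis U_dense : forall n f, A f -> forall eps, eps > 0 ->
  exists g, A g /\ U n g /\ sup_norm (fsub f g) < eps.

(** One step of the construction: move into [U n] and shrink the radius so that
    the closed ball of twice the new radius stays inside [U n]. *)
Lemma baire_step n f r : A f -> 0 < r -> exists g r',
  A g /\ 0 < r' /\ r' <= r / 2 /\ sup_norm (fsub f g) <= r /\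
  forall h, A h -> sup_norm (fsub h g) <= 2 * r' -> U n h.
Proof.
  intros Hf Hr. destruct (U_dense n f Hf r Hr) as [g [Hg [HUg Hfg]]].
  destruct (U_open n g Hg HUg) as [rho [Hrho Hball]].
  pose proof (Rmin_l (r / 2) (rho / 3)). pose proof (Rmin_r (r / 2) (rho / 3)).
  exists g, (Rmin (r / 2) (rho / 3)).
  split; [exact Hg | split; [apply Rmin_glb_lt; lra | split; [lra | split; [lra|]]]].
  intros h Hh Hhg. apply Hball; [exact Hh | lra].
Qed.

Theorem baire_dense_intersection f eps : A f -> eps > 0 ->
  exists F, A F /\ (forall n, U n F) /\ sup_norm (fsub f F) < eps.
Proof.
  intros Hf He.
  destruct (choice (fun (p : nat * ((K -> X) * R)) (q : (K -> X) * R) =>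
      A (fst (snd p)) -> 0 < snd (snd p) ->
      A (fst q) /\ 0 < snd q /\ snd q <= snd (snd p) / 2 /\
      sup_norm (fsub (fst (snd p)) (fst q)) <= snd (snd p) /\
      forall h, A h -> sup_norm (fsub h (fst q)) <= 2 * snd q -> U (fst p) h)) as [step Hstep].
  { intros [n [g r]]. destruct (classic (A g /\ 0 < r)) as [[Hg Hr]|Hn].
    - destruct (baire_step n g r Hg Hr) as [g' [r' Hg']]. exists (g', r'). intros _ _. exact Hg'.
    - exists (g, r). intros Hg Hr. exfalso; apply Hn; split; assumption. }
  set (sq := fix sq n := match n with O => (f, eps / 4) | S n' => step (n', sq n') end).
  set (fs := fun n => fst (sq n)). set (r := fun n => snd (sq n)).
  assert (Hinv : forall n, A (fs n) /\ 0 < r n).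
  { induction n as [|n IH]; [split; [exact Hf | unfold r; simpl; lra]|].
    destruct (Hstep (n, sq n) (proj1 IH) (proj2 IH)) as [Hfn [Hrn _]]. split; assumption. }
  assert (Hnext : forall n, r (S n) <= r n / 2 /\ sup_norm (fsub (fs n) (fs (S n))) <= r n /\
      forall h, A h -> sup_norm (fsub h (fs (S n))) <= 2 * r (S n) -> U n h).
  { intros n. destruct (Hinv n) as [Hfn Hrn].
    destruct (Hstep (n, sq n) Hfn Hrn) as [_ [_ Hspec]]. exact Hspec. }
  destruct (uniform_limit fs r (fun n => proj1 (Hinv n)) (fun n => proj2 (Hinv n))
      (fun n => proj1 (Hnext n)) (fun n => proj1 (proj2 (Hnext n)))) as [F [HF Hlim]].
  exists F. split; [exact HF | split].
  - intros n. apply (proj2 (proj2 (Hnext n))); [exact HF | apply Hlim].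
  - rewrite sup_sub_sym. pose proof (Hlim 0%nat) as H0. unfold r, fs in H0; simpl in H0. lra.
Qed.

End DenseOpen.
End Baire.

Section PeakDensity.
Variables (k : scalar_field) (K : MetricSpace) (X : NormedSpace (scalars k)).
Variable A : (K -> X) -> Prop.
Hypothesis HA : closed_subspace A.

Lemma peak_functional g t0 r : A g -> strong_peak_at g t0 -> r > 0 ->
  exists (phi : X -> scalars k) (h : K -> X) (theta : R),
    is_dual X phi /\ A h /\ phi (h t0) = s1 _ /\ (forall t, sabs _ (phi (h t)) <= 1) /\
    0 <= theta < 1 /\ forall t, mdist K t t0 >= r -> sabs _ (phi (h t)) <= theta.
Proof.
  intros Hg Hpk Hr. pose proof (closed_subspace_bounded k K X A HA g Hg) as Bg.
  pose proof (peak_nonzero_norm k K X g t0 Hpk) as HG.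
  pose proof (peak_attains k K X g t0 Hpk) as Hgt0.
  set (G := sup_norm g) in *.
  set (h := fscal (emb k (/ G)) g).
  assert (Hh : forall t, vnorm X (h t) = vnorm X (g t) / G).
  { intros t. unfold h, fscal. rewrite vnorm_scal, sabs_emb, Rabs_pos_eq.
    - unfold Rdiv; ring.
    - left; apply Rinv_0_lt_compat; lra. }
  destruct (norming_functional k X (h t0)) as [phi [Hd [Hphi Hphit0]]].
  destruct (peak_separated k K X g t0 r Hpk Hr) as [eta [Heta Hsep]].
  pose proof (Rmin_l eta G) as Heta1. pose proof (Rmin_r eta G) as Heta2.
  set (eta' := Rmin eta G) in *. assert (Heta' : eta' > 0) by (apply Rmin_glb_lt; lra).
  exists phi, h, (1 - eta' / G).
  split; [exact Hd | split; [apply HA, Hg | split; [| split; [| split]]]].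
  - rewrite Hphit0, Hh, Hgt0, <- emb1. f_equal. fold G. field. lra.
  - intros t. eapply Rle_trans; [apply Hphi|]. rewrite Hh. pose proof (sup_ge k K X g t Bg) as Hgt.
    apply (Rmult_le_reg_l G); [lra|]. fold G in Hgt. field_simplify; lra.
  - assert (eta' / G > 0) by (apply Rdiv_lt_0_compat; lra).
    split; [apply (Rmult_le_reg_l G); [lra|]; field_simplify|]; lra.
  - intros t Ht. eapply Rle_trans; [apply Hphi|]. rewrite Hh. specialize (Hsep t Ht).
    apply (Rmult_le_reg_l G); [lra|]. fold G in Hsep. field_simplify; lra.
Qed.

Hypothesis Hpoly : forall (x : X) (phi : X -> scalars k) (f : K -> X) (m : nat),
  is_dual X phi -> A f -> (m >= 1)%nat -> A (fun t => vscal X (spow (phi (f t)) m) x).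

Lemma peak_polynomial g t0 r (w : X) : A g -> strong_peak_at g t0 -> r > 0 ->
  exists p, A p /\ p t0 = w /\ (forall t, vnorm X (p t) <= vnorm X w) /\
    forall t, mdist K t t0 >= r -> vnorm X (p t) <= vnorm X w / 4.
Proof.
  intros Hg Hpk Hr.
  destruct (peak_functional g t0 r Hg Hpk Hr)
    as [phi [h [theta [Hd [Hh [Ht0 [Hle1 [Htheta Hfar]]]]]]]].
  destruct (pow_lt_1_zero theta ltac:(rewrite Rabs_pos_eq; lra) (1 / 4) ltac:(lra)) as [N HN].
  set (m := S N).
  assert (Hm : theta ^ m < 1 / 4).
  { rewrite <- (Rabs_pos_eq (theta ^ m)) by (apply pow_le; lra). apply HN. unfold m; lia. }
  exists (fun t => vscal X (spow (phi (h t)) m) w).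
  assert (Hnorm : forall t,
      vnorm X (vscal X (spow (phi (h t)) m) w) = sabs _ (phi (h t)) ^ m * vnorm X w)
    by (intros t; rewrite vnorm_scal, sabs_spow; reflexivity).
  pose proof (norm_nonneg _ X w).
  split; [apply Hpoly; [exact Hd | exact Hh | unfold m; lia] | split; [| split]].
  - rewrite Ht0, spow_s1, vscal_1. reflexivity.
  - intros t. rewrite Hnorm.
    pose proof (pow_incr (sabs _ (phi (h t))) 1 m (conj (sabs_nonneg _ _) (Hle1 t))) as Hpow.
    rewrite pow1 in Hpow. nra.
  - intros t Ht. rewrite Hnorm.
    pose proof (pow_incr (sabs _ (phi (h t))) theta m (conj (sabs_nonneg _ _) (Hfar t Ht))).
    nra.
Qed.

Lemma norming_almost_max (F : K -> Prop) f eps : norming F A -> A f -> eps > 0 ->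
  exists t, F t /\ vnorm X (f t) > sup_norm f - eps.
Proof.
  intros Hnorm Hf He. apply NNPP; intro Hn. destruct (Hnorm f Hf) as [_ Hleast].
  enough (sup_norm f <= sup_norm f - eps) by lra. apply Hleast.
  intros r [t [Ht ->]]. apply Rnot_lt_le; intro. apply Hn; exists t; split; [exact Ht | lra].
Qed.

(** If the strong peak points norm A, every [f] in A is approximated by functions
    concentrated at scale [1/(n+1)]: add to [f] a peaking polynomial pushing
    [f] up at a strong peak point where [f] almost attains its norm. *)
Lemma concentrated_dense n : norming (rho A) A ->
  forall f, A f -> forall eps, eps > 0 ->
  exists h, A h /\ concentrated k K X n h /\ sup_norm (fsub f h) < eps.
Proof.
  intros Hnorm f Hf eps He. pose proof (closed_subspace_bounded k K X A HA f Hf) as Bf.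
  set (c := eps / 2).
  destruct (norming_almost_max (rho A) f (c / 4) Hnorm Hf ltac:(unfold c; lra))
    as [t0 [[g [Hg [Hpk _]]] Hft0]].
  pose proof Hpk as [_ [[s Hs] _]].
  destruct (norm_push _ X (f t0) (g s) c Hs ltac:(unfold c; lra)) as [w [Hw Hfw]].
  destruct (peak_polynomial g t0 (/ (INR n + 1)) w Hg Hpk (inv_succ_pos n))
    as [p [Hp [Hpt0 [Hple Hpfar]]]].
  set (h := fadd f p).
  assert (HAh : A h) by (apply HA; assumption).
  pose proof (closed_subspace_bounded k K X A HA h HAh) as Bh.
  assert (Hht0 : vnorm X (h t0) = vnorm X (f t0) + c) by (unfold h, fadd; rewrite Hpt0; exact Hfw).
  pose proof (sup_nonneg k K X f Bf). pose proof (sup_ge k K X h t0 Bh).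
  exists h. split; [exact HAh | split; [split|]].
  - exists t0. intro E. rewrite E, norm_zero in Hht0. unfold c in *. lra.
  - exists (c / 2). split; [unfold c; lra|]. exists t0. intros t Ht.
    apply Rnot_le_lt. intro Hfar. specialize (Hpfar t (Rle_ge _ _ Hfar)).
    pose proof (sup_ge k K X f t Bf). pose proof (vnorm_triangle X (f t) (p t)).
    change (h t) with (vadd X (f t) (p t)) in Ht. rewrite Hw in Hpfar. lra.
  - apply Rle_lt_trans with c; [|unfold c; lra].
    apply sup_le; [|unfold c; lra].
    intros t. unfold fsub, h, fadd. rewrite vsub_add, norm_opp, <- Hw. apply Hple.
Qed.

End PeakDensity.

Lemma dense_peak_norming (k : scalar_field) (K : MetricSpace) (X : NormedSpace (scalars k))
  (A : (K -> X) -> Prop) : closed_subspace A -> dense_in (peak_funs A) A -> norming (rho A) A.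
Proof.
  intros HA [_ Hdense] f Hf. pose proof (closed_subspace_bounded k K X A HA f Hf) as Bf. split.
  - intros r [t [_ ->]]. apply sup_ge, Bf.
  - intros b Hb. apply Rnot_lt_le. intro Hlt. set (eps := (sup_norm f - b) / 3).
    destruct (Hdense f Hf eps ltac:(unfold eps; lra)) as [g [[Hg [t0 Hpk]] Hfg]].
    pose proof (closed_subspace_bounded k K X A HA g Hg) as Bg.
    pose proof (peak_attains k K X g t0 Hpk) as Hgt0.
    assert (Hft0 : vnorm X (f t0) <= b).
    { apply Hb. exists t0. split; [exists g; split; [exact Hg | split; assumption] | reflexivity]. }
    pose proof (sup_diff k K X f g Bf Bg). pose proof (sup_sub_ge k K X f g t0 Bf Bg).
    pose proof (norm_ge_sub _ X (f t0) (g t0)). unfold eps in *. lra.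
Qed.

Lemma peak_funs_concentrated (k : scalar_field) (K : MetricSpace) (X : NormedSpace (scalars k))
  (A : (K -> X) -> Prop) : complete_metric K -> closed_subspace A ->
  forall f, A f -> (peak_funs A f <-> forall n, concentrated k K X n f).
Proof.
  intros HK HA f Hf. split.
  - intros [_ [t Hpk]] n. exact (peak_concentrated k K X f t n Hpk).
  - intros HU. split; [exact Hf | exact (concentrated_peak k K X f HK (proj1 HA f Hf) HU)].
Qed.

Theorem theorem2p1 (k : scalar_field) (K : MetricSpace)
  (X : NormedSpace (scalars k)) (A : (K -> X) -> Prop) :
  complete_metric K ->
  Banach X ->
  closed_subspace A ->
  (forall (x : X) (phi : X -> scalars k) (f : K -> X) (m : nat),
      is_dual X phi -> A f -> (m >= 1)%nat ->
      A (fun t => vscal X (spow (phi (f t)) m) x)) ->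
  (norming (rho A) A <-> (dense_in (peak_funs A) A /\ Gdelta_in (peak_funs A) A)).
Proof.
  intros HK HX HA Hpoly.
  pose proof (closed_subspace_bounded k K X A HA) as HAb.
  pose proof (peak_funs_concentrated k K X A HK HA) as Hpeak.
  assert (HGdelta : Gdelta_in (peak_funs A) A).
  { split; [intros f [Hf _]; exact Hf|].
    exists (concentrated k K X). split; [intros n; exact (concentrated_open k K X A n HAb)|].
    exact Hpeak. }
  split.
  - intros Hnorm. split; [split|exact HGdelta].
    + intros f [Hf _]; exact Hf.
    + intros f Hf eps He.
      destruct (baire_dense_intersection k K X A HX HA (concentrated k K X)
          (fun n => concentrated_open k K X A n HAb)
          (fun n => concentrated_dense k K X A HA Hpoly n Hnorm) f eps Hf He)
        as [F [HF [HU Hclose]]].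
      exists F. split; [apply Hpeak; assumption | exact Hclose].
  - intros [Hdense _]. exact (dense_peak_norming k K X A HA Hdense).
Qed.
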